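(* Let $d\in\mathbb{Z}_2$ with $d\equiv0\pmod 4$ and $\sqrt d\notin\mathbb{Z}_2$, and $f(x)=x^2+x-d$ on $\mathbb{Z}_2$. Then $f(1+2\mathbb{Z}_2)\subset 2\mathbb{Z}_2$ and $2\mathbb{Z}_2$ is a disjoint union of finitely many minimal components. More precisely, let $n_0=\lfloor v_2(d)/2\rfloor+1$. (1) If $v_2(d)=2$ and $v_2(d-4)=3$, then $2\mathbb{Z}_2$ consists of the three minimal components $4\mathbb{Z}_2$, $2+8\mathbb{Z}_2$, $6+8\mathbb{Z}_2$. (2) If $v_2(d)=2$ and $v_2(d-4)=4$, then $2\mathbb{Z}_2$ consists of the five minimal components $4\mathbb{Z}_2$, $2+16\mathbb{Z}_2$, $6+16\mathbb{Z}_2$, $10+16\mathbb{Z}_2$, $14+16\mathbb{Z}_2$. (3) If $v_2(d)\ge3$ and $v_2(d)$ is odd, then $2\mathbb{Z}_2=E_1\sqcup E_2$ with $$E_1=\bigsqcup_{2\le n\le n_0}\big(2^{n-1}+2^n\mathbb{Z}_2\big)-\{\text{I-}[n-2]\},\qquad E_2=2^{n_0}\mathbb{Z}_2-\{\text{I-}[n_0-1]\}.$$ (4) If $v_2(d)\ge3$ and $v_2(d)$ is even, then $2\mathbb{Z}_2=E'_1\sqcup E'_2\sqcup E'_3$ with $$E'_1=\bigsqcup_{2\le n\le n_0-1}\big(2^{n-1}+2^n\mathbb{Z}_2\big)-\{\text{I-}[n-2]\},\quad E'_2=2^{n_0}\mathbb{Z}_2-\{\text{I-}[n_0-2]\},$$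 $$E'_3=\big(2^{n_0-1}+2^{n_0}\mathbb{Z}_2\big)-\{\text{I-}[v_2(d-2^{v_2(d)})-n_0]\}.$$
   Context: $v_2$ is the $2$-adic valuation. A minimal component of $f$ is a clopen set $E$ with $f(E)\subset E$ and $f:E\to E$ minimal (all orbits dense). For $n\ge1$, $f_n$ is the induced map on $\mathbb{Z}/2^n\mathbb{Z}$, $f_n(x\bmod 2^n)=f(x)\bmod 2^n$. A cycle of $f_n$ (at level $n$) of length $k$ is a tuple $\sigma=(x_1,\dots,x_k)$ of distinct elements with $f_n(x_i)=x_{i+1}$, $f_n(x_k)=x_1$. The set $X_\sigma=\{y\in\mathbb{Z}/2^{n+1}\mathbb{Z}:y\bmod 2^n\in\sigma\}$ is $f_{n+1}$-invariant; its cycles are the lifts of $\sigma$. $\sigma$ grows if $X_\sigma$ is a single cycle of length $2k$ and splits if it is a union of two cycles of length $k$. For $k\ge0$, ''$\sigma$ splits $k$ times and then its lifts grow forever'' means every cycle at levels $n,\dots,n+k-1$ lying above $\sigma$ (reducing mod $2^n$ into $\sigma$) splits, and every cycle at every level $\ge n+k$ lying above $\sigma$ grows. A ball $F=x+2^n\mathbb{Z}_2$ with $(x\bmod 2^n)$ a fixed point of $f_n$ is of type I-$[k]$ if this 1-cycle splits $k$ times and then its lifts grow forever (then $F$ is a disjoint union of $2^k$ balls of radius $2^{-n-k}$, each a minimal component). $E=\bigsqcup_{n\in J}F_n-\{\text{I-}[k]\}$ means $E$ is the disjoint union of the $F_n$, each of type I-$[k]$ ($k$ possibly depending on $n$ as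 indicated); $F-\{\text{I-}[k]\}$ for a single set means $F$ is of type I-$[k]$. *)

(* The ring Z_2 of 2-adic integers is built as the inverse
   limit of Z/2^n Z: an element is a sequence of integers x_n with
   x_{n+1} = x_n (mod 2^n); its residue at level n is x_n mod 2^n. *)
From HB Require Import structures.
From mathcomp Require Import all_boot all_order all_algebra.
Set Implicit Arguments. Unset Strict Implicit. Unset Printing Implicit Defensive.
Import Order.TTheory GRing.Theory Num.Theory.
Local Open Scope ring_scope.

Definition pw (n : nat) : int := ((2 ^ n)%N)%:Z.

Definition compat (x : nat -> int) := forall n : nat, (x n.+1 = x n %[mod pw n])%Z.
Definition Z2 := {x : nat -> int | compat x}.

Definition res (x : Z2) (n : nat) : int := (sval x n %% pw n)%Z.

Definition eqZ2 (x y : Z2) : Prop := forall n, res x n = res y n.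

Lemma compat_const (c : int) : compat (fun _ => c).
Proof. by []. Qed.
Lemma compat_add (x y : Z2) : compat (fun n => sval x n + sval y n).
Proof. move=> n; by rewrite -modzDm (proj2_sig x n) (proj2_sig y n) modzDm. Qed.
Lemma compat_mul (x y : Z2) : compat (fun n => sval x n * sval y n).
Proof. move=> n; by rewrite -modzMm (proj2_sig x n) (proj2_sig y n) modzMm. Qed.
Lemma compat_opp (x : Z2) : compat (fun n => - sval x n).
Proof. move=> n; by rewrite -modzNm (proj2_sig x n) modzNm. Qed.

Definition Z2const (c : int) : Z2 := exist _ (fun _ => c) (compat_const c).
Definition Z2add (x y : Z2) : Z2 := exist _ _ (compat_add x y).
Definition Z2mul (x y : Z2) : Z2 := exist _ _ (compat_mul x y).
Definition Z2opp (x : Z2) : Z2 := exist _ _ (compat_opp x).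
Definition Z2sub (x y : Z2) : Z2 := Z2add x (Z2opp y).

Definition val2 (x : Z2) (k : nat) : Prop := res x k = 0 /\ res x k.+1 <> 0.

Definition fmap (d x : Z2) : Z2 := Z2sub (Z2add (Z2mul x x) x) d.

(** induced map f_n on Z/2^nZ (elements represented by integers in [0,2^n)):
    f_n(r) = f(r) mod 2^n *)
Definition fn (d : Z2) (n : nat) (r : int) : int := res (fmap d (Z2const r)) n.

Definition ball (c : int) (n : nat) : Z2 -> Prop := fun x => res x n = (c %% pw n)%Z.

Definition openZ2 (E : Z2 -> Prop) : Prop :=
  forall x, E x -> exists n, forall y, res y n = res x n -> E y.
Definition closedZ2 (E : Z2 -> Prop) : Prop := openZ2 (fun x => ~ E x).
Definition clopenZ2 (E : Z2 -> Prop) : Prop := openZ2 E /\ closedZ2 E.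

Definition orbit_dense (d : Z2) (E : Z2 -> Prop) (x : Z2) : Prop :=
  forall y, E y -> forall n, exists k, res (iter k (fmap d) x) n = res y n.

Definition minimal_component (d : Z2) (E : Z2 -> Prop) : Prop :=
  [/\ clopenZ2 E, exists x, E x,
      (forall x, E x -> E (fmap d x)) &
      (forall x, E x -> orbit_dense d E x)].

Definition emptyZ2 : Z2 -> Prop := fun _ => False.

Definition disjoint_union (S : Z2 -> Prop) (Es : seq (Z2 -> Prop)) : Prop :=
  (forall x, S x <-> exists2 i, (i < size Es)%N & nth emptyZ2 Es i x) /\
  (forall i j x, (i < j < size Es)%N ->
     ~ (nth emptyZ2 Es i x /\ nth emptyZ2 Es j x)).

Definition min_decomp (d : Z2) (S : Z2 -> Prop) (Es : seq (Z2 -> Prop)) : Prop :=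
  disjoint_union S Es /\
  (forall i, (i < size Es)%N -> minimal_component d (nth emptyZ2 Es i)).

Definition cycle_at (d : Z2) (n : nat) (s : seq int) : bool :=
  [&& s != [::], uniq s, all (fun y => (0 <= y) && (y < pw n)) s
    & fcycle (fn d n) s].

Definition Xlift (n : nat) (s : seq int) (y : int) : Prop :=
  (0 <= y) && (y < pw n.+1) /\ (y %% pw n)%Z \in s.

Definition grows (d : Z2) (n : nat) (s : seq int) : Prop :=
  exists t, [/\ cycle_at d n.+1 t, size t = (2 * size s)%N &
                forall y, y \in t <-> Xlift n s y].

Definition splits (d : Z2) (n : nat) (s : seq int) : Prop :=
  exists t1 t2, [/\ cycle_at d n.+1 t1 /\ cycle_at d n.+1 t2,
     size t1 = size s /\ size t2 = size s,
     (forall y, y \in t1 -> y \notin t2) &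
     forall y, (y \in t1 \/ y \in t2) <-> Xlift n s y].

Definition above (n : nat) (s t : seq int) : bool :=
  all (fun y => (y %% pw n)%Z \in s) t.

Definition splits_then_grows (d : Z2) (n : nat) (s : seq int) (k : nat) : Prop :=
  (forall m t, (n <= m < n + k)%N -> cycle_at d m t -> above n s t ->
      splits d m t) /\
  (forall m t, (n + k <= m)%N -> cycle_at d m t -> above n s t ->
      grows d m t).

Definition typeI (d : Z2) (n : nat) (c : int) (k : nat) : Prop :=
  let r := (c %% pw n)%Z in fn d n r = r /\ splits_then_grows d n [:: r] k.

From HB Require Import structures.
From mathcomp Require Import all_boot all_order all_algebra.
From mathcomp Require Import zify ring.
From Stdlib Require Import Classical_Prop.
Import Order.TTheory GRing.Theory Num.Theory.
Set Implicit Arguments. Unset Strict Implicit. Unset Printing Implicit Defensive.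
Local Open Scope ring_scope.

(** For [x] in [2 Z_2] put [p = v_2(x^2 - d) = v_2(f(x) - x)]; as [d] is
    not a square, [p <= v_2(d) + 2]. On a ball [c + 2^n Z_2] ([n >= 2], [c] even)
    on which [p] is constant, [f(x) = x + 2^p (mod 2^(p+1))], and
    [f(y) - f(x) = (y - x)(1 + x + y)] with [1 + x + y = 1 (mod 4)]. By induction
    on [j], the [2^j]-th iterate of [f] moves every point by exactly [2^(p+j)]
    and is the identity modulo [4 (y - x)] on differences [y - x]; hence each
    [x] of [c + 2^p Z_2] visits every class modulo [2^m] of that ball.
    Consequently [c + 2^p Z_2] is a minimal component, and [c + 2^n Z_2] is of
    type I-[p - n]: its cycles are fixed points that split up to level [p] and
    grow from level [p] on. The theorem then amounts to computing [v_2(x^2 - d)]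
    on each ball of the decomposition from [v_2(d)] and [v_2(d - 2^v_2(d))];
    when [v_2(x^2 - d)] would exceed [v_2(d) + 2], Hensel lifting produces a
    square root of [d]. *)

Lemma pw0 : pw 0 = 1. Proof. by []. Qed.
Lemma pw_gt0 n : 0 < pw n.
Proof. by rewrite /pw ltz_nat expn_gt0. Qed.
Lemma pw_neq0 n : pw n != 0.
Proof. by rewrite gt_eqF // pw_gt0. Qed.
Lemma pwS n : pw n.+1 = 2 * pw n.
Proof. by rewrite /pw expnS PoszM. Qed.
Lemma pwD m n : pw (m + n) = pw m * pw n.
Proof. by rewrite /pw expnD PoszM. Qed.
Lemma pw_dvd m n : (m <= n)%N -> (pw m %| pw n)%Z.
Proof. by move=> h; rewrite -(subnKC h) pwD dvdz_mulr. Qed.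
Lemma pw_dvd2 n : (1 <= n)%N -> (2 %| pw n)%Z.
Proof. exact: (@pw_dvd 1). Qed.
Lemma pwS_ndvd p : ~ (pw p.+1 %| pw p)%Z.
Proof.
have : ~ (pw p * 2 %| pw p * 1)%Z by rewrite dvdz_mul2l ?pw_neq0.
by rewrite mulr1 mulrC -pwS.
Qed.

Lemma int_parity (s : int) : (2 %| s)%Z \/ (2 %| s - 1)%Z.
Proof.
have [h|/dvdz_mod0P h] := boolP (2 %| s)%Z; [by left | right].
apply/dvdz_mod0P; lia.
Qed.

Lemma odd_sq (b : int) : (2 %| b - 1)%Z -> ~ (2 %| b * b)%Z.
Proof.
move=> hb h.
have : (2 %| b * b - (b - 1) * (b + 1))%Z by rewrite rpredB // dvdz_mulr.
by have -> : b * b - (b - 1) * (b + 1) = 1 by ring.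
Qed.

Lemma odd_part (a : int) : a != 0 -> exists j b, a = pw j * b /\ (2 %| b - 1)%Z.
Proof.
elim: {a}`|a|%N {-2}a (leqnn `|a|%N) => [|n IH] a ha hne.
  by move: hne; have -> : a = 0 by lia.
case: (int_parity a) => [/dvdzP [q hq]|h]; last by exists 0%N, a; rewrite pw0 mul1r.
have hq0 : q != 0 by apply: contraNneq hne => e; rewrite hq e mul0r.
have [|j [b [eq hb]]] := IH q _ hq0; first by rewrite hq in ha; lia.
by exists j.+1, b; rewrite hq eq pwS; split => //; ring.
Qed.

Definition eqpw (m : nat) (a b : int) := (pw m %| a - b)%Z.

Lemma eqpw_refl m a : eqpw m a a. Proof. by rewrite /eqpw subrr dvdz0. Qed.
Lemma eqpw_sym m a b : eqpw m a b -> eqpw m b a.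
Proof. by rewrite /eqpw -opprB rpredN. Qed.
Lemma eqpw_trans m a b c : eqpw m a b -> eqpw m b c -> eqpw m a c.
Proof. by move=> h1 h2; rewrite /eqpw -(subrKA b) rpredD. Qed.
Lemma eqpw_le m n a b : (m <= n)%N -> eqpw n a b -> eqpw m a b.
Proof. by move=> /pw_dvd; apply: dvdz_trans. Qed.
Lemma eqpwD m a b a' b' : eqpw m a b -> eqpw m a' b' -> eqpw m (a + a') (b + b').
Proof. by move=> h1 h2; rewrite /eqpw opprD addrACA rpredD. Qed.
Lemma eqpwN m a b : eqpw m a b -> eqpw m (- a) (- b).
Proof. by rewrite /eqpw -opprD rpredN. Qed.
Lemma eqpwB m a b a' b' : eqpw m a b -> eqpw m a' b' -> eqpw m (a - a') (b - b').
Proof. by move=> h1 /eqpwN; apply: eqpwD. Qed.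
Lemma eqpwM m a b a' b' : eqpw m a b -> eqpw m a' b' -> eqpw m (a * a') (b * b').
Proof.
rewrite /eqpw => h1 h2.
have -> : a * a' - b * b' = (a - b) * a' + b * (a' - b') by ring.
by apply: rpredD; [apply: dvdz_mulr | apply: dvdz_mull].
Qed.
Lemma eqpwE m a b : eqpw m a b <-> (a %% pw m = b %% pw m)%Z.
Proof. by rewrite /eqpw -eqz_mod_dvd; split => /eqP. Qed.
Lemma eqpw_mod m a : eqpw m (a %% pw m)%Z a.
Proof. by apply/eqpwE; rewrite modz_mod. Qed.

Lemma mod_pw_range m a : 0 <= (a %% pw m)%Z < pw m.
Proof.
rewrite modz_ge0 ?pw_neq0 //=.
by have := ltz_mod a (pw_neq0 m); rewrite gtr0_norm ?pw_gt0.
Qed.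
Lemma eqpw_small m a b : eqpw m a b -> 0 <= a < pw m -> 0 <= b < pw m -> a = b.
Proof. by move/eqpwE => h ha hb; rewrite -(modz_small ha) -(modz_small hb). Qed.
Lemma pw_rangeS m y : 0 <= y < pw m -> 0 <= y < pw m.+1.
Proof. by rewrite pwS; have := pw_gt0 m; lia. Qed.
Lemma eqpw_even n y c : (1 <= n)%N -> (2 %| c)%Z -> eqpw n y c -> (2 %| y)%Z.
Proof. by move=> hn hc /(eqpw_le hn) h; rewrite -(subrK c y) rpredD. Qed.

Lemma odd_ndvd2 (s : int) : (2 %| s - 1)%Z -> ~ (2 %| s)%Z.
Proof.
move=> h1 h0; have : (2 %| s - (s - 1))%Z by rewrite rpredB.
by have -> : s - (s - 1) = 1 by ring.
Qed.

Lemma odd_part_ge (z s : int) p k : z = pw p * s -> (2 %| s - 1)%Z -> (pw k %| z)%Z ->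
  (k <= p)%N.
Proof.
move=> -> hs hk; rewrite leqNgt; apply/negP => hpk; apply: (odd_ndvd2 hs).
have : (pw p * 2 %| pw p * s)%Z.
  by rewrite [pw p * 2]mulrC -pwS; apply: dvdz_trans (pw_dvd hpk) hk.
by rewrite dvdz_mul2l ?pw_neq0.
Qed.

(** [pw p.+1 %| z - pw p] says [v_2(z) = p]. *)
Lemma exact_val_unique (z : int) p q :
  (pw p.+1 %| z - pw p)%Z -> (pw q.+1 %| z - pw q)%Z -> p = q.
Proof.
wlog hpq : p q / (p <= q)%N => [hw hp hq|hp hq].
  by case: (leqP p q) => h; [|apply/esym]; apply: hw => //; apply: ltnW.
case: (ltngtP p q) (hpq) => // lt_pq _; exfalso; apply: (@pwS_ndvd p).
have -> : pw p = (z - pw q) + pw q - (z - pw p) by ring.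
apply: rpredB => //; apply: rpredD; last exact: pw_dvd.
by apply: dvdz_trans hq; apply: pw_dvd.
Qed.

Lemma sval_eqpw (x : Z2) m n : (m <= n)%N -> eqpw m (sval x n) (sval x m).
Proof.
elim: n => [|n IH]; first by rewrite leqn0 => /eqP ->; apply: eqpw_refl.
rewrite leq_eqVlt => /orP [/eqP -> | ]; first exact: eqpw_refl.
rewrite ltnS => hmn; apply: eqpw_trans (IH hmn).
by apply: (eqpw_le hmn); apply/eqpwE; apply: (proj2_sig x n).
Qed.

Lemma sval_eqpw2 (x : Z2) p m m' : (p <= m)%N -> (p <= m')%N ->
  eqpw p (sval x m) (sval x m').
Proof. by move=> h h'; apply: eqpw_trans (sval_eqpw x h) (eqpw_sym (sval_eqpw x h')). Qed.

Lemma res_le (x : Z2) m n : (m <= n)%N -> res x m = (res x n %% pw m)%Z.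
Proof.
move=> h; apply/eqpwE; apply: eqpw_trans (eqpw_sym (sval_eqpw x h)) _.
exact/eqpw_sym/(eqpw_le h)/eqpw_mod.
Qed.

Lemma res_range (x : Z2) k : 0 <= res x k < pw k.
Proof. exact: mod_pw_range. Qed.

Lemma res_nat (x : Z2) M : exists i : nat, (i < 2 ^ M)%N /\ res x M = Posz i.
Proof.
have /andP [h0 h1] := res_range x M.
by exists `|res x M|%N; rewrite gez0_abs // -ltz_nat gez0_abs.
Qed.

Lemma res0E (z : Z2) m : res z m = 0 <-> (pw m %| sval z m)%Z.
Proof. by split => [/dvdz_mod0P | /dvdz_mod0P]. Qed.

Lemma res0_le (z : Z2) m w : res z w = 0 -> (m <= w)%N -> (pw m %| sval z m)%Z.
Proof.
move/res0E => h hm; rewrite -(subrK (sval z w) (sval z m)) rpredD //.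
  exact: eqpw_sym (sval_eqpw z hm).
exact: dvdz_trans (pw_dvd hm) h.
Qed.

Lemma res_val2 (x : Z2) k : res x k = 0 -> res x k.+1 != 0 -> res x k.+1 = pw k.
Proof.
move=> h0 /eqP h1; rewrite (res_le x (leqnSn k)) in h0.
have hr := res_range x k.+1; rewrite pwS in hr.
have hq := divz_eq (res x k.+1) (pw k); rewrite h0 addr0 in hq.
have hp := pw_gt0 k.
set q := ((res x k.+1) %/ pw k)%Z in hq.
rewrite hq in h1 hr *; have -> : q = 1 by nia.
by rewrite mul1r.
Qed.

Lemma res0_dvd (z : Z2) w m : res z w = 0 -> (w <= m)%N -> (pw w %| sval z m)%Z.
Proof.
move/res0E => h hm; have := sval_eqpw z hm; rewrite /eqpw => h'.
by rewrite -(subrK (sval z w) (sval z m)) rpredD.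
Qed.

Lemma val2_exact (z : Z2) w : val2 z w -> (pw w.+1 %| sval z w.+1 - pw w)%Z.
Proof.
case=> /res0E h0 h1.
have : (pw w %| sval z w.+1)%Z.
  by rewrite -(subrK (sval z w) (sval z w.+1)) rpredD //; apply: sval_eqpw.
case/dvdzP => s hs; case: (int_parity s) => hs2.
  by exfalso; apply: h1; apply/res0E; rewrite hs pwS dvdz_mul.
have -> : sval z w.+1 - pw w = (s - 1) * pw w by rewrite hs; ring.
by rewrite pwS dvdz_mul.
Qed.

Lemma val2_ndvd (d : Z2) v m : val2 d v -> (v < m)%N -> ~ (pw v.+1 %| sval d m)%Z.
Proof.
case=> _ h1 hm h; apply: h1; apply/res0E.
rewrite -(subrK (sval d m) (sval d v.+1)) rpredD //.
exact: eqpw_sym (sval_eqpw d hm).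
Qed.

Lemma ballE c p x : ball c p x <-> eqpw p (sval x p) c.
Proof. by rewrite eqpwE. Qed.

Lemma ball01E x : ball 0 1 x <-> res x 1 = 0.
Proof. by rewrite /ball mod0z. Qed.

Lemma ball_eqpw c p x m : ball c p x -> (p <= m)%N -> eqpw p (sval x m) c.
Proof. by move/ballE => h hm; apply: eqpw_trans (sval_eqpw x hm) h. Qed.

Lemma ball_clopen c p : clopenZ2 (ball c p).
Proof. by split => x hx; exists p => y hy; rewrite /ball hy. Qed.

Definition F (D x : int) : int := x * x + x - D.

Lemma sval_iter d x k m :
  sval (iter k (fmap d) x) m = iter k (F (sval d m)) (sval x m).
Proof. by elim: k => //= k ->. Qed.

Lemma fnE d m r : fn d m r = (F (sval d m) r %% pw m)%Z.
Proof. by []. Qed.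

Lemma eqpwF m D D' x x' : eqpw m D D' -> eqpw m x x' -> eqpw m (F D x) (F D' x').
Proof. by move=> hD hx; apply: eqpwB => //; apply: eqpwD => //; apply: eqpwM. Qed.

Lemma eqpw_iterF m D D' x x' k : eqpw m D D' -> eqpw m x x' ->
  eqpw m (iter k (F D) x) (iter k (F D') x').
Proof. by move=> hD hx; elim: k => //= k IH; apply: eqpwF. Qed.

Lemma iter_fn_eqpw d m k r : eqpw m (iter k (fn d m) r) (iter k (F (sval d m)) r).
Proof.
elim: k => /= [|k IH]; first exact: eqpw_refl.
by rewrite fnE; apply: eqpw_trans (eqpw_mod _ _) _; apply: eqpwF => //; apply: eqpw_refl.
Qed.

Lemma iter_fn_range d m k r : 0 <= r < pw m -> 0 <= iter k (fn d m) r < pw m.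
Proof. by case: k => //= k _; rewrite fnE mod_pw_range. Qed.

Lemma iter_fn_eqpwS d M k x :
  eqpw M (iter k (fn d M) x) (iter k (F (sval d M.+1)) x).
Proof.
apply: eqpw_trans (iter_fn_eqpw _ _ _ _) (eqpw_iterF _ _ (eqpw_refl _ _)).
exact: eqpw_sym (sval_eqpw _ (leqnSn _)).
Qed.

(** * Dynamics of [F D] on a ball with exact drift *)

(** [F D x - x = x^2 - D] has valuation exactly [p] on the ball [c + 2^p Z]. *)
Definition int_drift (D c : int) (p : nat) :=
  forall x, eqpw p x c -> (pw p.+1 %| x * x - D - pw p)%Z.

Lemma iter_pow2S (T : Type) (f : T -> T) j x :
  iter (2 ^ j.+1) f x = iter (2 ^ j) f (iter (2 ^ j) f x).
Proof. by rewrite -iterD expnS mul2n -addnn. Qed.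

Section IntDrift.
Variables (D c : int) (p : nat).
Hypotheses (p_ge2 : (2 <= p)%N) (c_even : (2 %| c)%Z) (hD : int_drift D c p).

Lemma F_ball x : eqpw p x c -> eqpw p (F D x) c.
Proof.
move=> hx; rewrite /eqpw.
have -> : F D x - c = (x - c) + (x * x - D - pw p) + pw p by rewrite /F; ring.
rewrite rpredD ?dvdzz // rpredD //.
by apply: dvdz_trans (hD hx); apply: pw_dvd.
Qed.

Lemma iter_F_ball x k : eqpw p x c -> eqpw p (iter k (F D) x) c.
Proof. by move=> hx; elim: k => //= k; apply: F_ball. Qed.

Lemma iter_pow2_F j :
  (forall x y, eqpw p x c -> eqpw p y c ->
     (4 * (y - x) %| (iter (2 ^ j) (F D) y - iter (2 ^ j) (F D) x) - (y - x))%Z) /\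
  (forall x, eqpw p x c ->
     (pw (p + j).+1 %| iter (2 ^ j) (F D) x - x - pw (p + j))%Z).
Proof.
elim: j => [|j [IHdiff IHmove]].
  split=> [x y hx hy|x hx] /=; last first.
    rewrite addn0 /F; have -> : x * x + x - D - x - pw p = x * x - D - pw p by ring.
    exact: hD.
  have -> : F D y - F D x - (y - x) = (y - x) * (y + x) by rewrite /F; ring.
  rewrite mulrC dvdz_mul //.
  have -> : y + x = (y - c) + (x - c) + 2 * c by ring.
  have h4 : (4 %| pw p)%Z by apply: (@pw_dvd 2).
  apply: rpredD; first by apply: rpredD; apply: dvdz_trans h4 _.
  by rewrite [4](_ : _ = 2 * 2) // dvdz_mul.
set H := iter (2 ^ j) (F D).
have Hball x : eqpw p x c -> eqpw p (H x) c by move=> hx; apply: iter_F_ball.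
split=> [x y hx hy|x hx]; rewrite !iter_pow2S -/H.
  have e1 := IHdiff x y hx hy.
  have e2 := IHdiff (H x) (H y) (Hball x hx) (Hball y hy).
  have -> : H (H y) - H (H x) - (y - x) =
     (H (H y) - H (H x) - (H y - H x)) + (H y - H x - (y - x)) by ring.
  rewrite rpredD //; apply: dvdz_trans e2; rewrite dvdz_mul //.
  rewrite -(subrK (y - x) (H y - H x)) rpredD //.
  by apply: dvdz_trans e1; apply: dvdz_mull.
have e1 := IHdiff x (H x) hx (Hball x hx).
have e2 := IHmove x hx.
have -> : H (H x) - x - pw (p + j.+1) =
   (H (H x) - H x - (H x - x)) + 2 * (H x - x - pw (p + j)).
  by rewrite addnS pwS; ring.
rewrite addnS [pw _.+2]pwS; apply: rpredD; last by rewrite dvdz_mul.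
apply: dvdz_trans e1; rewrite pwS mulrA dvdz_mul //.
rewrite -(subrK (pw (p + j)) (H x - x)) rpredD ?dvdzz //.
by apply: dvdz_trans e2; apply: pw_dvd.
Qed.

Lemma iter_F_period m x : (p <= m)%N -> eqpw p x c ->
  eqpw m (iter (2 ^ (m - p)) (F D) x) x.
Proof.
move=> hm hx; have := (iter_pow2_F (m - p)).2 x hx; rewrite subnKC // => e.
rewrite /eqpw -(subrK (pw m) (_ - x)) rpredD ?dvdzz //.
by apply: dvdz_trans e; apply: pw_dvd.
Qed.

Lemma F_ball_transitive m a b : (p <= m)%N -> eqpw p a c -> eqpw p b c ->
  exists k, eqpw m (iter k (F D) a) b.
Proof.
elim: m => [|m IH] hm ha hb; first by move: (leq_trans p_ge2 hm).
rewrite leq_eqVlt in hm; case/orP: hm => [/eqP <- | hm].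
  by exists 0%N; apply: eqpw_trans ha (eqpw_sym hb).
have [k /dvdzP [s hs]] := IH hm ha hb.
set z := iter k (F D) a in hs.
(* [F^k a - b] is [0] or [2^m] modulo [2^(m+1)]; [2^(m-p)] more steps fix the latter. *)
case: (int_parity s) => hs2; first by exists k; rewrite /eqpw hs pwS dvdz_mul.
have := (iter_pow2_F (m - p)).2 z (iter_F_ball k ha); rewrite subnKC // => e.
exists (2 ^ (m - p) + k)%N; rewrite iterD -/z /eqpw.
have -> : iter (2 ^ (m - p)) (F D) z - b =
   (iter (2 ^ (m - p)) (F D) z - z - pw m) + (z - b - pw m) + pw m.+1.
  by rewrite pwS; ring.
rewrite hs rpredD ?dvdzz // rpredD //.
have -> : s * pw m - pw m = (s - 1) * pw m by ring.
by rewrite pwS dvdz_mul.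
Qed.

End IntDrift.

Lemma fcycle_iterP (T : eqType) (f : T -> T) t x y :
  fcycle f t -> x \in t -> y \in t -> exists k, y = iter k f x.
Proof.
move=> ht /rot_to [i q e]; rewrite -(mem_rot i) e inE => /orP [/eqP ->|hy].
  by exists 0%N.
have /fpathE hq : fcycle f (x :: q) by rewrite -e rot_cycle.
have : y \in rcons q x by rewrite mem_rcons inE hy orbT.
by rewrite hq => /trajectP [k _ ->]; exists k.+1; rewrite iterSr.
Qed.

Lemma iter_mem_fcycle (T : eqType) (f : T -> T) t y k :
  fcycle f t -> y \in t -> iter k f y \in t.
Proof. by move=> ht hy; elim: k => //= k; apply: mem_fcycle. Qed.

Lemma fcycle_fixed (T : eqType) (f : T -> T) x s :
  (forall y, y \in x :: s -> f y = y) -> uniq (x :: s) -> fcycle f (x :: s) -> s = [::].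
Proof.
case: s => // z s hf hu /= /andP [/eqP hz _].
by rewrite -hz hf ?mem_head //= mem_head in hu.
Qed.

Lemma iter_mod (T : Type) (f : T -> T) L x k :
  iter L f x = x -> iter k f x = iter (k %% L) f x.
Proof.
move=> hL; rewrite {1}(divn_eq k L) addnC iterD; congr (iter _ f _).
by elim: (k %/ L)%N => //= q IH; rewrite mulSn iterD IH.
Qed.

Lemma fcycle_traject (T : eqType) (f : T -> T) x L : (0 < L)%N -> iter L f x = x ->
  fcycle f (traject f x L).
Proof.
case: L => // L _ hL; rewrite trajectS /cycle.
by rewrite -[x in rcons _ x]hL iterSr -trajectSr fpath_traject.
Qed.

Lemma cycle1 d m z : 0 <= z < pw m -> fn d m z = z -> cycle_at d m [:: z].
Proof. by move=> hr hf; rewrite /cycle_at /= hr /= hf eqxx. Qed.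

Lemma above_eqpw n c t y : above n [:: (c %% pw n)%Z] t -> y \in t -> eqpw n y c.
Proof. by move=> /allP h /h; rewrite inE => /eqP e; apply/eqpwE. Qed.

Definition lifts (p M : nat) (r : int) :=
  [seq r + pw p * Posz i | i <- iota 0 (2 ^ (M - p))].

Lemma lifts_uniq p M r : uniq (lifts p M r).
Proof.
rewrite map_inj_uniq ?iota_uniq // => i j /addrI /(mulfI (pw_neq0 p)).
by case.
Qed.

Lemma size_lifts p M r : size (lifts p M r) = (2 ^ (M - p))%N.
Proof. by rewrite size_map size_iota. Qed.

Lemma mem_lifts p M r y : (p <= M)%N ->
  (y \in lifts p M (r %% pw p)%Z) <-> (0 <= y < pw M /\ eqpw p y r).
Proof.
move=> hM; have -> : pw M = pw p * Posz (2 ^ (M - p)) by rewrite -{1}(subnKC hM) pwD.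
set K := (2 ^ (M - p))%N.
have hr := mod_pw_range p r; have hp := pw_gt0 p.
rewrite eqpwE; set r0 := (r %% pw p)%Z in hr *; set P := pw p in hr hp *.
split.
  case/mapP => i; rewrite mem_iota add0n => hi ->.
  have hi' : Posz i < Posz K by rewrite ltz_nat.
  split; last by rewrite addrC mulrC modzMDl modz_small.
  have h2 : P * (Posz i + 1) <= P * Posz K by rewrite ler_pM2l //; lia.
  nia.
case=> /andP [h0 h1] hz.
have hq := divz_eq y P; set q := (y %/ P)%Z in hq.
have q0 : 0 <= q by nia.
have qK : q < Posz K by nia.
apply/mapP; exists `|q|%N; first by rewrite mem_iota add0n -ltz_nat gez0_abs.
by rewrite gez0_abs // {1}hq hz; ring.
Qed.

(** On the ball [c + 2^n Z_2], [f(x) - x = x^2 - d] has valuation exactly [p];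
    only [d] modulo [2^(p+1)] is involved. *)
Definition drift (d : Z2) (c : int) (n p : nat) :=
  forall x : int, eqpw n x c -> (pw p.+1 %| x * x - sval d p.+1 - pw p)%Z.

Lemma drift_sub d c n p c' n' : drift d c n p -> eqpw n c' c -> (n <= n')%N ->
  drift d c' n' p.
Proof. by move=> hd hc hn x hx; apply: hd; apply: eqpw_trans (eqpw_le hn hx) hc. Qed.

Section DriftBall.
Variables (d : Z2) (c : int) (n p : nat).
Hypotheses (n_ge2 : (2 <= n)%N) (n_le_p : (n <= p)%N) (c_even : (2 %| c)%Z).
Hypothesis hd : drift d c n p.

Lemma int_drift_sval M c' : eqpw n c' c -> (p < M)%N -> int_drift (sval d M) c' p.
Proof.
move=> hc hM x hx.
have -> : x * x - sval d M - pw p =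
  (x * x - sval d p.+1 - pw p) + (sval d p.+1 - sval d M) by ring.
have hdM := sval_eqpw2 d (leqnn p.+1) hM.
by apply: rpredD => //; apply: hd; apply: eqpw_trans (eqpw_le n_le_p hx) hc.
Qed.

Lemma F_sval_sub m x :
  F (sval d m) x - x = (x * x - sval d p.+1 - pw p) + pw p + (sval d p.+1 - sval d m).
Proof. by rewrite /F; ring. Qed.

Lemma F_sval_fix m x : eqpw n x c -> (m <= p)%N -> eqpw m (F (sval d m) x) x.
Proof.
move=> hx hm; have hdm := sval_eqpw d (leq_trans hm (leqnSn p)).
rewrite /eqpw F_sval_sub; apply: rpredD => //; apply: rpredD; last exact: pw_dvd.
by apply: dvdz_trans (hd hx); apply: pw_dvd; apply: leq_trans hm _.
Qed.

Lemma F_sval_ball m x : eqpw n x c -> (p <= m)%N -> eqpw p (F (sval d m) x) x.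
Proof.
move=> hx hm; have hdm := sval_eqpw2 d (leqnSn p) hm.
rewrite /eqpw F_sval_sub; apply: rpredD => //; apply: rpredD; last exact: dvdzz.
by apply: dvdz_trans (hd hx); apply: pw_dvd.
Qed.

Lemma fn_fix m y : eqpw n y c -> (m <= p)%N -> 0 <= y < pw m -> fn d m y = y.
Proof.
move=> hy hm hr; rewrite fnE; apply: eqpw_small (mod_pw_range _ _) hr.
exact: eqpw_trans (eqpw_mod _ _) (F_sval_fix hy hm).
Qed.

Section Level.
Variables (M : nat) (t0 : int).
Hypotheses (p_le_M : (p <= M)%N) (t0c : eqpw n t0 c) (t0_range : 0 <= t0 < pw M).

Lemma iter_fn_ball k y : eqpw p y t0 -> eqpw p (iter k (fn d M) y) t0.
Proof.
move=> hy; elim: k => //= k IH; rewrite fnE.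
apply: eqpw_trans (eqpw_le p_le_M (eqpw_mod _ _)) (eqpw_trans _ IH).
by apply: F_sval_ball => //; apply: eqpw_trans (eqpw_le n_le_p IH) t0c.
Qed.

Let p_ge2 := leq_trans n_ge2 n_le_p.
Let t0_even := eqpw_even (ltnW n_ge2) c_even t0c.
Let t0_drift := int_drift_sval t0c (leq_ltn_trans p_le_M (ltnSn M)).

Lemma fn_reach y : 0 <= y < pw M -> eqpw p y t0 -> exists k, iter k (fn d M) t0 = y.
Proof.
move=> hyr hy; have [k hk] := F_ball_transitive p_ge2 t0_even t0_drift p_le_M (eqpw_refl _ _) hy.
exists k; apply: eqpw_small hyr; last exact: iter_fn_range.
exact: eqpw_trans (iter_fn_eqpwS _ _ _ _) hk.
Qed.

Lemma fn_period : iter (2 ^ (M - p)) (fn d M) t0 = t0.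
Proof.
apply: eqpw_small t0_range; [|exact: iter_fn_range].
apply: eqpw_trans (iter_fn_eqpwS _ _ _ _) _.
exact: (iter_F_period p_ge2 t0_even t0_drift p_le_M (eqpw_refl _ _)).
Qed.

Lemma cycle_perm_lifts t : cycle_at d M t -> t0 \in t ->
  perm_eq t (lifts p M (t0 %% pw p)%Z).
Proof.
case/and4P=> _ ut /allP trange tcycle t0t.
apply: uniq_perm ut (lifts_uniq _ _ _) _ => y; apply/idP/idP.
  move=> yt; apply/mem_lifts => //; split; first exact: trange.
  by have [k ->] := fcycle_iterP tcycle t0t yt; apply: iter_fn_ball (eqpw_refl _ _).
case/mem_lifts => // yr yt0; have [k <-] := fn_reach yr yt0.
exact: iter_mem_fcycle.
Qed.

Lemma traject_cycle :
  let t := traject (fn d M) t0 (2 ^ (M - p)) in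
  cycle_at d M t /\ t =i lifts p M (t0 %% pw p)%Z.
Proof.
move=> t; have hL : (0 < 2 ^ (M - p))%N by rewrite expn_gt0.
have memt : t =i lifts p M (t0 %% pw p)%Z.
  move=> y; apply/idP/idP.
    case/trajectP => i _ ->; apply/mem_lifts => //.
    by rewrite iter_fn_range //; split=> //; apply: iter_fn_ball (eqpw_refl _ _).
  case/mem_lifts => // yr yt0; have [k <-] := fn_reach yr yt0.
  by apply/trajectP; exists (k %% 2 ^ (M - p))%N; rewrite ?ltn_mod // -(iter_mod _ fn_period).
have ut : uniq t.
  apply: leq_size_uniq (lifts_uniq p M (t0 %% pw p)%Z) _ _.
    by move=> y; rewrite memt.
  by rewrite size_traject size_lifts.
split=> //; apply/and4P; split=> //.
- by rewrite -size_eq0 size_traject -lt0n.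
- by apply/allP => y /trajectP [i _ ->]; apply: iter_fn_range.
- exact: fcycle_traject fn_period.
Qed.

End Level.

Lemma cycle_grows m t : (p <= m)%N -> cycle_at d m t ->
  above n [:: (c %% pw n)%Z] t -> grows d m t.
Proof.
move=> hpm ht hab; have := ht; case/and4P => /eqP tne _ /allP trange _.
case: t tne ht hab trange => // t0 s _ ht hab trange; set t := t0 :: s in ht hab trange *.
have t0c := above_eqpw hab (mem_head _ _).
have hpm1 := leq_trans hpm (leqnSn m).
have [ht' memt'] := traject_cycle hpm1 t0c (pw_rangeS (trange t0 (mem_head _ _))).
have permt := cycle_perm_lifts hpm t0c (trange t0 (mem_head _ _)) ht (mem_head _ _).
eexists; split; first exact: ht'.
  by rewrite size_traject (perm_size permt) size_lifts subSn // expnS.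
move=> y; rewrite memt' /Xlift (perm_mem permt); split.
  case/mem_lifts => // yr yt0; split => //; apply/mem_lifts => //.
  split; first exact: mod_pw_range.
  exact: eqpw_trans (eqpw_le hpm (eqpw_mod _ _)) yt0.
case=> yr /mem_lifts [] // _ yt0; apply/mem_lifts => //; split => //.
exact: eqpw_trans (eqpw_sym (eqpw_le hpm (eqpw_mod _ _))) yt0.
Qed.

Lemma cycle_splits m t : (n <= m)%N -> (m < p)%N -> cycle_at d m t ->
  above n [:: (c %% pw n)%Z] t -> splits d m t.
Proof.
move=> hnm hmp /and4P [hne hu hra hcy] hab.
case: t hne hu hra hcy hab => // y s _ hu hra hcy hab.
have hall z : z \in y :: s -> fn d m z = z.
  move=> hz; apply: fn_fix (above_eqpw hab hz) (ltnW hmp) _.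
  by move/allP: hra => /(_ z hz).
have es := fcycle_fixed hall hu hcy; subst s.
have hyr : 0 <= y < pw m by move: hra => /= /andP [].
have hyc : eqpw n y c := above_eqpw hab (mem_head _ _).
have hy2 : 0 <= y + pw m < pw m.+1 by rewrite pwS; have := pw_gt0 m; lia.
have hyc2 : eqpw n (y + pw m) c.
  by rewrite /eqpw addrAC rpredD // pw_dvd.
exists [:: y], [:: y + pw m]; split.
- split; last exact: cycle1 hy2 (fn_fix hyc2 hmp hy2).
  exact: cycle1 (pw_rangeS hyr) (fn_fix hyc hmp (pw_rangeS hyr)).
- by [].
- by move=> z; rewrite !inE => /eqP ->; apply/eqP => h; have := pw_gt0 m; lia.
move=> z; rewrite /Xlift !inE; split.
  case=> /eqP ->; first by rewrite pw_rangeS // modz_small.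
  by rewrite hy2 modzDr modz_small.
case=> hz /eqP hzm; case: (ltP z (pw m)) => hlt.
  by left; rewrite -hzm modz_small //; move: hz => /andP [-> _].
right; apply/eqP.
have h1 : 0 <= z - pw m < pw m by move: hz; rewrite pwS; lia.
have : ((z - pw m) %% pw m)%Z = y by rewrite -hzm -[in RHS](subrK (pw m) z) modzDr.
by rewrite modz_small // => <-; ring.
Qed.

Lemma typeI_of_drift : typeI d n c (p - n).
Proof.
split; first by apply: fn_fix (eqpw_mod _ _) n_le_p (mod_pw_range _ _).
split=> m t; rewrite subnKC //; last exact: cycle_grows.
by case/andP; apply: cycle_splits.
Qed.

Lemma minimal_component_ball : minimal_component d (ball c p).
Proof.
have p_ge2 := leq_trans n_ge2 n_le_p.
split; [exact: ball_clopen | by exists (Z2const c) | |].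
  move=> x /ballE hx; apply/ballE.
  by apply: eqpw_trans (F_sval_ball (eqpw_le n_le_p hx) (leqnn p)) hx.
move=> x hx y hy m; case: (leqP m p) => hm.
  exists 0%N; apply/eqpwE => /=.
  apply: eqpw_trans (eqpw_sym (sval_eqpw x hm)) (eqpw_trans _ (sval_eqpw y hm)).
  by apply: eqpw_le hm _; apply: eqpw_trans ((ballE _ _ _).1 hx) (eqpw_sym ((ballE _ _ _).1 hy)).
have hD := int_drift_sval (eqpw_refl n c) hm.
have [k hk] := F_ball_transitive p_ge2 c_even hD (ltnW hm)
  (ball_eqpw hx (ltnW hm)) (ball_eqpw hy (ltnW hm)).
by exists k; apply/eqpwE; rewrite sval_iter.
Qed.

End DriftBall.

(** * Squares and the valuation of [x^2 - d] *)

Lemma sq_shell n x : (1 <= n)%N -> eqpw n x (pw n.-1) ->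
  eqpw (2 * n).+1 (x * x) (pw (2 * n - 2)).
Proof.
case: n => // k _; rewrite /eqpw /= pwS => /dvdzP [q hq].
have -> : x = pw k * (1 + 2 * q) by rewrite -[x](subrK (pw k)) hq; ring.
have -> : (2 * k.+1 - 2 = k + k)%N by lia.
have -> : ((2 * k.+1).+1 = (k + k) + 3)%N by lia.
rewrite !pwD.
have -> : pw k * (1 + 2 * q) * (pw k * (1 + 2 * q)) - pw k * pw k =
  (pw k * pw k) * (4 * (q * (q + 1))) by ring.
apply: dvdz_mul; first exact: dvdzz.
have -> : pw 3 = 4 * 2 by [].
apply: dvdz_mul; first exact: dvdzz.
case: (int_parity q) => h; first exact: dvdz_mulr.
apply: dvdz_mull; have -> : q + 1 = (q - 1) + 2 by ring.
by rewrite rpredD.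
Qed.

Lemma drift_shell d n p : (1 <= n)%N -> (p.+1 <= (2 * n).+1)%N ->
  (pw p.+1 %| pw (2 * n - 2) - sval d p.+1 - pw p)%Z -> drift d (pw n.-1) n p.
Proof.
move=> hn hp h x hx.
have -> : x * x - sval d p.+1 - pw p =
   (x * x - pw (2 * n - 2)) + (pw (2 * n - 2) - sval d p.+1 - pw p) by ring.
by rewrite rpredD // (dvdz_trans (pw_dvd hp)) //; apply: sq_shell.
Qed.

Lemma drift_ball0 d n p : (p.+1 <= 2 * n)%N ->
  (pw p.+1 %| - sval d p.+1 - pw p)%Z -> drift d 0 n p.
Proof.
move=> hp h x /dvdzP [q]; rewrite subr0 => ->.
have -> : q * pw n * (q * pw n) - sval d p.+1 - pw p =
  (q * q) * (pw n * pw n) + (- sval d p.+1 - pw p) by ring.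
by rewrite rpredD // dvdz_mull // -pwD pw_dvd //; lia.
Qed.

Definition is_square (d : Z2) := exists y : Z2, eqZ2 (Z2mul y y) d.

(** Hensel lifting: starting from [a = 2^j b], [b] odd, with [a^2 = d] modulo
    [2^(2j+3)], the [m]-th term is a square root of [d] modulo [2^(m+2j+3)]. *)
Fixpoint sqrt_seq (d : Z2) (a : int) (j : nat) (m : nat) : int :=
  if m is m'.+1 then
    let s := sqrt_seq d a j m' in
    if (pw (m' + 2 * j + 3).+1 %| s * s - sval d (m' + 2 * j + 3)%N.+1)%Z then s
    else s + pw (m' + j + 2)
  else a.

Section Hensel.
Variables (d : Z2) (a : int) (j : nat) (b : int).
Hypotheses (ab : a = pw j * b) (b_odd : (2 %| b - 1)%Z).
Hypothesis a_sqrt : (pw (2 * j + 3) %| a * a - sval d (2 * j + 3)%N)%Z.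

Lemma sqrt_seqP m :
  (exists u, sqrt_seq d a j m = pw j * u /\ (2 %| u - 1)%Z) /\
  (pw (m + 2 * j + 3) %| sqrt_seq d a j m * sqrt_seq d a j m - sval d (m + 2 * j + 3)%N)%Z.
Proof.
elim: m => [|m [[u [hu hu1]] IH]]; first by split; [exists b | rewrite add0n].
rewrite /=; set s := sqrt_seq d a j m in hu IH *; set K := (m + 2 * j + 3)%N in IH *.
have -> : (m.+1 + 2 * j + 3 = K.+1)%N by rewrite /K; lia.
case: ifP => htest; first by split => //; exists u.
split.
  exists (u + pw (m + 2)); split; first by rewrite hu mulrDr -pwD; congr (_ + pw _); lia.
  by rewrite addrAC rpredD // pw_dvd2 //; lia.
have /dvdzP [e he] : (pw K %| s * s - sval d K.+1)%Z.
  have hdK := eqpw_sym (sval_eqpw d (leqnSn K)).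
  have -> : s * s - sval d K.+1 = (s * s - sval d K) + (sval d K - sval d K.+1) by ring.
  by rewrite rpredD.
have he2 : (2 %| e - 1)%Z.
  case: (int_parity e) => // h; move/negP: htest; case.
  by rewrite he pwS dvdz_mul.
have p1 : 2 * s * pw (m + j + 2) = pw K * u.
  have -> : 2 * s * pw (m + j + 2) = (2 * pw j * pw (m + j + 2)) * u by rewrite hu; ring.
  by rewrite -pwS -pwD; congr (pw _ * _); rewrite /K; lia.
have p2 : pw (m + j + 2) * pw (m + j + 2) = pw K.+1 * pw m.
  by rewrite -!pwD; congr pw; rewrite /K; lia.
have -> : (s + pw (m + j + 2)) * (s + pw (m + j + 2)) - sval d K.+1 =
  (s * s - sval d K.+1) + 2 * s * pw (m + j + 2) + pw (m + j + 2) * pw (m + j + 2) by ring.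
rewrite he p1 p2 rpredD ?dvdz_mulr //.
have -> : e * pw K + pw K * u = ((e - 1) + (u - 1) + 2) * pw K by ring.
rewrite pwS; apply: dvdz_mul; last exact: dvdzz.
by apply: rpredD; [apply: rpredD | apply: dvdzz].
Qed.

Lemma hensel_sqrt : is_square d.
Proof.
have hc : compat (sqrt_seq d a j).
  move=> n; apply/eqpwE => /=; case: ifP => _; first exact: eqpw_refl.
  by rewrite /eqpw addrAC subrr add0r pw_dvd //; lia.
exists (exist _ _ hc) => n; apply/eqpwE => /=.
have hn : (n <= n + 2 * j + 3)%N by lia.
exact: eqpw_trans (eqpw_le hn (sqrt_seqP n).2) (sval_eqpw d hn).
Qed.

End Hensel.

Lemma exists_val2 d : ~ is_square d -> exists v, val2 d v.
Proof.
move=> hns; have [ex|nex] := classic (exists m, res d m != 0); last first.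
  exfalso; apply: hns; exists (Z2const 0) => m; rewrite /res /= mulr0 mod0z.
  by apply/esym/eqP; apply: contraT => h; case: nex; exists m.
case: (ex_minnP ex) => [[|v]]; first by rewrite /res pw0 modz1 eqxx.
move=> hv hmin; exists v; split; last exact/eqP.
by apply/eqP; apply: contraT => /hmin; rewrite ltnn.
Qed.

(** Write [a = 2^j b] with [b] odd: if [2j < v] then [v_2(a^2 - d) = 2j], if
    [2j > v] then [v_2(a^2 - d) = v], and if [2j = v] Hensel lifting applies. *)
Lemma sq_sub_ndvd d v : ~ is_square d -> val2 d v ->
  forall a : int, ~ (pw (v + 3) %| a * a - sval d (v + 3)%N)%Z.
Proof.
move=> hns hv a h; have hle : (v.+1 <= v + 3)%N by lia.
have hnot := val2_ndvd hv hle.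
have ha : a != 0.
  apply/eqP => ea; apply: hnot; rewrite ea mul0r sub0r rpredN in h.
  exact: dvdz_trans (pw_dvd hle) h.
have [j [b [ea hb]]] := odd_part ha.
have eaa : a * a = pw (j + j) * (b * b) by rewrite ea pwD; ring.
case: (ltngtP (j + j) v) => hjv.
- have hd : (pw (j + j).+1 %| sval d (v + 3)%N)%Z.
    rewrite -(subrK (sval d (j + j)%N.+1) (sval d (v + 3)%N)) rpredD ?(res0_le hv.1) //.
    by apply: sval_eqpw2; lia.
  have : (pw (j + j).+1 %| a * a)%Z.
    by rewrite -(subrK (sval d (v + 3)%N) (a * a)) rpredD // (dvdz_trans _ h) // pw_dvd //; lia.
  by rewrite eaa pwS [2 * _]mulrC dvdz_mul2l ?pw_neq0 //; apply: odd_sq.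
- apply: hnot; have -> : sval d (v + 3)%N = a * a - (a * a - sval d (v + 3)%N) by ring.
  apply: rpredB; first by rewrite eaa dvdz_mulr // pw_dvd.
  exact: dvdz_trans (pw_dvd hle) h.
- apply: hns; apply: (hensel_sqrt ea hb).
  by rewrite (_ : 2 * j + 3 = v + 3)%N; last lia.
Qed.

Lemma disjoint_union_of_index (S : Z2 -> Prop) (Es : seq (Z2 -> Prop)) (idx : Z2 -> nat) :
  (forall x, S x -> (idx x < size Es)%N) ->
  (forall x i, (i < size Es)%N -> (nth emptyZ2 Es i x <-> S x /\ idx x = i)) ->
  disjoint_union S Es.
Proof.
move=> hs hn; split=> [x|i j x /andP [hij hj] [hi' hj']].
  split=> [hx|[i hi /(hn x i hi) []//]].
  by exists (idx x); [exact: hs | apply/hn; [exact: hs|]].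
have hi : (i < size Es)%N by exact: ltn_trans hij hj.
case/(hn x i hi): hi' => _ e1; case/(hn x j hj): hj' => _ e2.
by move: hij; rewrite -e1 -e2 ltnn.
Qed.

(** [val2_trunc x N = min (v_2(x), N)]. *)
Definition val2_trunc (x : Z2) N := find (fun k => res x k.+1 != 0) (iota 0 N).

Lemma val2_trunc_le x N : (val2_trunc x N <= N)%N.
Proof. by have := find_size (fun k => res x k.+1 != 0) (iota 0 N); rewrite size_iota. Qed.

Lemma res_lt_val2_trunc x N k : (k < val2_trunc x N)%N -> res x k.+1 = 0.
Proof.
move=> h; have := before_find 0%N h; rewrite nth_iota ?add0n; first by move/negbFE/eqP.
exact: leq_trans h (val2_trunc_le x N).
Qed.

Lemma res_val2_trunc x N : (val2_trunc x N < N)%N -> res x (val2_trunc x N).+1 != 0.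
Proof.
move=> h; have hh : has (fun k => res x k.+1 != 0) (iota 0 N) by rewrite has_find size_iota.
by have := nth_find 0%N hh; rewrite nth_iota // add0n.
Qed.

Lemma val2_trunc_gt0 N x : (1 <= N)%N -> res x 1 = 0 -> (1 <= val2_trunc x N)%N.
Proof.
move=> hN h1; rewrite lt0n; apply/eqP => hg.
by have := @res_val2_trunc x N; rewrite hg h1 eqxx; move/(_ hN).
Qed.

Lemma shellE N n x : (2 <= n)%N -> (n <= N)%N ->
  (ball (pw n.-1) n x <-> res x 1 = 0 /\ val2_trunc x N = n.-1).
Proof.
case: n => [|[|k]] // _ hN.
rewrite /ball /= modz_small; last by rewrite [pw k.+2]pwS; have := pw_gt0 k.+1; lia.
split=> [hx|[h1 hg]].
  have low j : (j <= k.+1)%N -> res x j = 0.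
    by move=> hj; rewrite (res_le x (leq_trans hj (leqnSn _))) hx; apply/dvdz_mod0P/pw_dvd.
  split; first exact: low.
  case: (ltngtP (val2_trunc x N) k.+1) => // hg.
    have hlt : (val2_trunc x N < N)%N by apply: leq_trans hg _; apply: ltnW.
    by have := res_val2_trunc hlt; rewrite low ?eqxx.
  by have := pw_neq0 k.+1; rewrite -hx (res_lt_val2_trunc hg) eqxx.
have hlt : (val2_trunc x N < N)%N by rewrite hg.
have := res_val2_trunc hlt; rewrite hg => hne.
by apply: res_val2 hne; apply: (@res_lt_val2_trunc x N); rewrite hg.
Qed.

Lemma ball0E N x : (1 <= N)%N -> (ball 0 N x <-> res x 1 = 0 /\ val2_trunc x N = N).
Proof.
case: N => // N _; rewrite /ball mod0z; split=> [hx|[_ hg]]; last first.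
  by apply: (@res_lt_val2_trunc x N.+1); rewrite hg.
split; first by rewrite (res_le x (isT : (1 <= N.+1)%N)) hx mod0z.
case: (ltngtP (val2_trunc x N.+1) N.+1) => // hg.
  by have := res_val2_trunc hg; rewrite (res_le x hg) hx mod0z eqxx.
by have := val2_trunc_le x N.+1; rewrite leqNgt hg.
Qed.

Lemma disjoint_union_shells N : (1 <= N)%N ->
  disjoint_union (ball 0 1) ([seq ball (pw n.-1) n | n <- iota 2 N.-1] ++ [:: ball 0 N]).
Proof.
move=> hN; apply: (@disjoint_union_of_index _ _ (fun x => (val2_trunc x N).-1)).
  move=> x /ball01E h1; rewrite size_cat size_map size_iota /=.
  by have := val2_trunc_le x N; have := val2_trunc_gt0 hN h1; lia.
move=> x i; rewrite size_cat size_map size_iota /= nth_cat size_map size_iota => hi.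
have := val2_trunc_le x N; have := @val2_trunc_gt0 N x hN.
case: ifP => hi2 hpos hle.
  rewrite (nth_map 0%N) ?size_iota // nth_iota // (shellE (N := N)); [|lia|lia].
  rewrite ball01E; split => -[h1 h2]; split => //; first by rewrite h2.
  by have := hpos h1; lia.
have -> : (i - N.-1 = 0)%N by lia.
rewrite /= (ball0E _ hN) ball01E; split => -[h1 h2]; split => //.
  by rewrite h2; lia.
by have := hpos h1; lia.
Qed.

Lemma disjoint_union_shells_split N : (3 <= N)%N ->
  disjoint_union (ball 0 1)
    ([seq ball (pw n.-1) n | n <- iota 2 (N - 2)] ++ [:: ball 0 N; ball (pw N.-1) N]).
Proof.
move=> hN; have hN1 : (1 <= N)%N by lia.
pose idx x := let g := val2_trunc x N in
  if g == N then (N - 2)%N else if g == N.-1 then N.-1 else g.-1.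
apply: (@disjoint_union_of_index _ _ idx).
  move=> x /ball01E h1; rewrite size_cat size_map size_iota /= /idx.
  have := val2_trunc_le x N; have := val2_trunc_gt0 hN1 h1.
  by case: eqP => ?; [lia | case: eqP => ?; lia].
move=> x i; rewrite size_cat size_map size_iota /= nth_cat size_map size_iota => hi.
have := val2_trunc_le x N; have := @val2_trunc_gt0 N x hN1.
rewrite /idx; case: ifP => hi2 hpos hle.
  rewrite (nth_map 0%N) ?size_iota // nth_iota // (shellE (N := N)); [|lia|lia].
  rewrite ball01E; split => -[h1 h2]; split => //.
    by rewrite h2 /=; case: eqP => ?; [lia | case: eqP => ?; lia].
  by move: h2; have := hpos h1; case: eqP => ?; [lia | case: eqP => ?; lia].
case e: (i - (N - 2))%N => [|[|k]]; last by lia.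
- rewrite /= (ball0E _ hN1) ball01E; split => -[h1 h2]; split => //.
    by rewrite h2 eqxx; move/negbT: hi2; lia.
  by move: h2; have := hpos h1; case: eqP => ?; [lia | case: eqP => ?; lia].
- rewrite /= (shellE (N := N)); [|lia|lia].
  rewrite ball01E; split => -[h1 h2]; split => //.
    by rewrite h2; case: eqP => ?; [lia | case: eqP => ?; lia].
  by move: h2; have := hpos h1; case: eqP => ?; [lia | case: eqP => ?; lia].
Qed.

(** Reduces a partition of [2 Z_2] into balls of radius at least [2^-M] to a
    computation on the residues modulo [2^M]. *)
Lemma disjoint_union_residues (cs : seq (int * nat)) M (idx : int -> nat) :
  (1 <= M)%N -> all (fun cp => cp.2 <= M)%N cs ->
  all (fun i : nat => let r := Posz i in
     ((r %% pw 1 == 0)%Z ==> (idx r < size cs)%N) &&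
     all (fun j => let cp := nth (0, 0%N) cs j in
            ((r %% pw cp.2 == cp.1 %% pw cp.2)%Z == ((r %% pw 1 == 0)%Z && (idx r == j))))
       (iota 0 (size cs))) (iota 0 (2 ^ M)) ->
  disjoint_union (ball 0 1) [seq ball cp.1 cp.2 | cp <- cs].
Proof.
move=> hM hcs hall.
apply: (@disjoint_union_of_index _ _ (fun x => idx (res x M))).
  move=> x /ball01E h1; rewrite size_map.
  have [i [hi e]] := res_nat x M.
  move/allP: hall => /(_ i); rewrite mem_iota hi => /(_ isT) /andP [/implyP h _].
  by rewrite e; apply: h; rewrite -e -(res_le x hM) h1.
move=> x i; rewrite size_map => hi; rewrite (nth_map (0, 0%N)) //.
set cp := nth (0, 0%N) cs i.
have hk : (cp.2 <= M)%N by move/allP: hcs; apply; exact: mem_nth.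
have [r [hr e]] := res_nat x M.
move/allP: hall => /(_ r); rewrite mem_iota hr => /(_ isT) /andP [_ /allP /(_ i)].
rewrite mem_iota hi => /(_ isT) /eqP hb.
rewrite ball01E /ball (res_le x hk) (res_le x hM) e -/cp; split.
  by move=> h; move: hb; rewrite h eqxx => /esym /andP [/eqP -> /eqP ->].
by case=> [h1 h2]; apply/eqP; rewrite hb h1 h2 !eqxx.
Qed.

Lemma disjoint_union_mod8 :
  disjoint_union (ball 0 1) [:: ball 0 2; ball 2 3; ball 6 3].
Proof.
apply: (@disjoint_union_residues [:: (0, 2%N); (2, 3%N); (6, 3%N)] 4
   (fun r => if (r %% 4 == 0)%Z then 0%N else if (r %% 8 == 2)%Z then 1%N else 2%N)) => //.
Qed.

Lemma disjoint_union_mod16 :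
  disjoint_union (ball 0 1) [:: ball 0 2; ball 2 4; ball 6 4; ball 10 4; ball 14 4].
Proof.
apply: (@disjoint_union_residues [:: (0, 2%N); (2, 4%N); (6, 4%N); (10, 4%N); (14, 4%N)] 4
   (fun r => if (r %% 4 == 0)%Z then 0%N else if r == 2 then 1%N else
     if r == 6 then 2%N else if r == 10 then 3%N else 4%N)) => //.
Qed.

(** * The decomposition of [2 Z_2] into minimal components *)

Definition drift_pair (d : Z2) (cp : int * nat) : bool :=
  [&& (2 %| cp.1)%Z, (2 <= cp.2)%N &
      (pw cp.2.+1 %| cp.1 * cp.1 - sval d cp.2.+1 - pw cp.2)%Z].

Lemma drift_pairP d c p : drift_pair d (c, p) -> drift d c p p.
Proof.
case/and3P=> /= hc hp hq x hx.
have -> : x * x - sval d p.+1 - pw p = (x - c) * (x + c) + (c * c - sval d p.+1 - pw p) by ring.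
rewrite rpredD // pwS mulrC dvdz_mul //.
have -> : x + c = (x - c) + 2 * c by ring.
by rewrite rpredD ?dvdz_mulr // (dvdz_trans _ hx) // pw_dvd2 //; apply: ltnW.
Qed.

Definition residue_pairs N : seq (int * nat) :=
  undup [seq (Posz i, p) | p <- iota 0 N, i <- iota 0 (2 ^ p)].

Lemma mem_residue_pairs N c p :
  ((c, p) \in residue_pairs N) = (p < N)%N && (0 <= c < pw p).
Proof.
rewrite mem_undup; apply/allpairsPdep/andP.
  case=> q [i [hq hi [-> ->]]]; move: hq hi; rewrite !mem_iota !add0n => hq hi.
  by split=> //; rewrite /pw ltz_nat.
case=> hp /andP [h0 h1]; exists p, `|c|%N; rewrite !mem_iota !add0n hp gez0_abs //.
by split=> //; rewrite -ltz_nat gez0_abs.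
Qed.

Section Decomposition.
Variables (d : Z2) (v : nat).
Hypotheses (d4 : res d 2 = 0) (d_nonsq : ~ is_square d) (hv : val2 d v).

Definition drift_pairs := filter (drift_pair d) (residue_pairs (v + 3)).

Lemma mem_drift_pairs c p : (c, p) \in drift_pairs ->
  [/\ drift_pair d (c, p), (p < v + 3)%N & 0 <= c < pw p].
Proof. by rewrite mem_filter mem_residue_pairs => /and4P [-> -> -> ->]. Qed.

(** Valuations are read at the common level [v + 3], where balls of different
    radii can be compared. *)
Lemma drift_pair_val c p x : (c, p) \in drift_pairs -> res x p = c ->
  (pw p.+1 %| sval x (v + 3) * sval x (v + 3) - sval d (v + 3)%N - pw p)%Z.
Proof.
case/mem_drift_pairs => /drift_pairP hd hN _ hx.
have hxc : eqpw p (sval x (v + 3)) c.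
  by apply: eqpw_trans (sval_eqpw x (ltnW hN)) _; rewrite -hx; apply: eqpw_sym (eqpw_mod _ _).
have hdN := sval_eqpw d hN; have := hd _ hxc.
have -> : sval x (v + 3) * sval x (v + 3) - sval d (v + 3)%N - pw p =
  (sval x (v + 3) * sval x (v + 3) - sval d p.+1 - pw p) - (sval d (v + 3)%N - sval d p.+1) by ring.
by move=> h; rewrite rpredB.
Qed.

Lemma drift_pairs_unique cp cp' x : cp \in drift_pairs -> cp' \in drift_pairs ->
  res x cp.2 = cp.1 -> res x cp'.2 = cp'.1 -> cp = cp'.
Proof.
case: cp cp' => c p [c' p'] /= h h' e e'.
have ep := exact_val_unique (drift_pair_val h e) (drift_pair_val h' e').
by move: e e'; rewrite ep => -> ->.
Qed.

Lemma drift_pairs_cover x : res x 1 = 0 -> has (fun cp => res x cp.2 == cp.1) drift_pairs.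
Proof.
move=> hx1; set a := sval x (v + 3); set z := a * a - sval d (v + 3)%N.
have hz : ~ (pw (v + 3) %| z)%Z by apply: sq_sub_ndvd.
have a_even : (2 %| a)%Z by apply: res0_dvd hx1 _; lia.
have hz4 : (pw 2 %| z)%Z.
  rewrite rpredB //; first by rewrite [pw 2](_ : _ = 2 * 2) // dvdz_mul.
  by apply: res0_dvd d4 _; lia.
have z0 : z != 0 by apply/eqP => e; apply: hz; rewrite e dvdz0.
have [p [s [zs hs]]] := odd_part z0.
have p_ge2 : (2 <= p)%N := odd_part_ge zs hs hz4.
have p_lt : (p < v + 3)%N.
  by rewrite ltnNge; apply/negP => h; apply: hz; rewrite zs dvdz_mulr // pw_dvd.
have hca : eqpw p (res x p) a.
  exact: eqpw_trans (eqpw_mod _ _) (eqpw_sym (sval_eqpw x (ltnW p_lt))).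
apply/hasP; exists (res x p, p) => //=.
rewrite mem_filter mem_residue_pairs p_lt res_range /drift_pair /= p_ge2 andbT.
rewrite (eqpw_even (ltnW p_ge2) a_even hca) /=.
have -> : res x p * res x p - sval d p.+1 - pw p =
  (res x p - a) * (res x p + a) + (z - pw p) + (sval d (v + 3)%N - sval d p.+1) by rewrite /z; ring.
have hdN := sval_eqpw d p_lt.
apply: rpredD => //; apply: rpredD.
  rewrite pwS [2 * _]mulrC; apply: dvdz_mul => //.
  have -> : res x p + a = (res x p - a) + 2 * a by ring.
  by apply: rpredD; [apply: dvdz_trans hca; apply: pw_dvd2; apply: ltnW | apply: dvdz_mulr].
have -> : z - pw p = (s - 1) * pw p by rewrite zs; ring.
by rewrite pwS; apply: dvdz_mul => //; apply: dvdzz.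
Qed.

Lemma disjoint_union_drift_balls :
  disjoint_union (ball 0 1) [seq ball cp.1 cp.2 | cp <- drift_pairs].
Proof.
pose idx x := find (fun cp => res x cp.2 == cp.1) drift_pairs.
apply: (@disjoint_union_of_index _ _ idx).
  by move=> x /ball01E h; rewrite size_map -has_find; apply: drift_pairs_cover.
move=> x i; rewrite size_map => hi; rewrite (nth_map (0, 0%N)) // ball01E.
have := mem_nth (0, 0%N) hi.
case e: (nth _ _ i) => [c p] /[dup] cpL /mem_drift_pairs [/and3P [hc hp _] _ hr] /=.
rewrite /ball modz_small //; split=> [hx|[h1 hidx]]; last first.
  move: (nth_find (0, 0%N) (drift_pairs_cover h1)); rewrite /idx in hidx.
  by rewrite hidx e => /eqP.
have h1 : res x 1 = 0.
  by rewrite (res_le x (ltnW hp)) hx; apply/dvdz_mod0P.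
have hj : (idx x < size drift_pairs)%N by rewrite -has_find drift_pairs_cover.
split=> //; apply/eqP; rewrite -(nth_uniq (0, 0%N) hj hi) ?filter_uniq ?undup_uniq //.
rewrite e; apply/eqP; apply: (drift_pairs_unique (mem_nth _ hj) cpL) _ hx.
exact/eqP/(nth_find _ (drift_pairs_cover h1)).
Qed.

Lemma min_decomp_drift_balls :
  min_decomp d (ball 0 1) [seq ball cp.1 cp.2 | cp <- drift_pairs].
Proof.
split; first exact: disjoint_union_drift_balls.
move=> i; rewrite size_map => hi; rewrite (nth_map (0, 0%N)) //.
case: (nth _ _ i) (mem_nth (0, 0%N) hi) => c p /mem_drift_pairs [hq _ _].
have [hc hp _] := and3P hq.
exact: minimal_component_ball hp (leqnn p) hc (drift_pairP hq).
Qed.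

End Decomposition.

Lemma fmap_odd_even d : res d 2 = 0 -> forall x : Z2, ball 1 1 x -> ball 0 1 (fmap d x).
Proof.
move=> hd x /ballE /dvdzP [q hq]; apply/ballE/dvdzP.
have /dvdzP [r hr] : (pw 1 %| sval d 1%N)%Z by apply: res0_le hd _.
exists ((1 + 3 * q + 2 * q * q) - r).
rewrite /= (_ : pw 1 = 2) // in hq hr *.
have -> : sval x 1%N = 1 + q * 2 by rewrite -hq; ring.
by rewrite hr /F; ring.
Qed.

Lemma val2_ge2 d v : res d 2 = 0 -> val2 d v -> (2 <= v)%N.
Proof.
move=> hd2 [_ hv]; rewrite leqNgt; apply/negP => hlt; apply: hv; apply/res0E.
exact: res0_le hd2 hlt.
Qed.

Lemma minimal_component_ball0 d : val2 d 2 -> minimal_component d (ball 0 2).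
Proof.
move/val2_exact => h; apply: (minimal_component_ball (leqnn 2) (leqnn 2) (dvdz0 _)).
apply: drift_ball0 => //.
have -> : - sval d 3 - pw 2 = - (sval d 3 - pw 2) - pw 3 by rewrite (pwS 2); ring.
by rewrite rpredB ?rpredN ?dvdzz.
Qed.

Lemma minimal_component_shell2 d c w : (3 <= w <= 4)%N ->
  val2 (Z2sub d (Z2const 4)) w -> eqpw 2 c 2 -> minimal_component d (ball c w).
Proof.
case/andP=> w3 w4 /val2_exact hv hc.
have c_even : (2 %| c)%Z := eqpw_even (isT : (1 <= 2)%N) (dvdzz 2) hc.
apply: (minimal_component_ball (leqnn 2) (ltnW w3) c_even).
apply: drift_sub _ hc (leqnn 2); apply: drift_shell => //.
have -> : pw (2 * 2 - 2) - sval d w.+1 - pw w = - (sval d w.+1 + - 4 - pw w) - pw w.+1.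
  by rewrite pwS; have -> : pw (2 * 2 - 2) = 4 by []; ring.
by rewrite rpredB ?rpredN ?dvdzz.
Qed.

Lemma typeI_shell d v n : val2 d v -> (2 <= n)%N -> (2 * n - 1 <= v)%N ->
  typeI d n (pw n.-1) (n - 2).
Proof.
move=> hv hn hnv; have -> : (n - 2 = (2 * n - 2) - n)%N by lia.
apply: (typeI_of_drift hn _ (pw_dvd2 _)); [lia | lia |].
apply: drift_shell; [lia | lia |].
by rewrite addrAC subrr add0r rpredN (res0_le hv.1) //; lia.
Qed.

Lemma typeI_ball0 d v n : val2 d v -> (2 <= n)%N -> (n <= v < 2 * n)%N ->
  typeI d n 0 (v - n).
Proof.
move=> /val2_exact hv hn /andP [hnv hv2]; apply: typeI_of_drift => //.
apply: drift_ball0 => //.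
have -> : - sval d v.+1 - pw v = - (sval d v.+1 - pw v) - pw v.+1 by rewrite pwS; ring.
by rewrite rpredB ?rpredN ?dvdzz.
Qed.

(** For [v = v_2(d)] even, [d = 2^v u] with [u] odd, and [w = v_2(d - 2^v)]
    satisfies [v < w <= v + 2] unless [u = 1 (mod 8)], i.e. unless [d] is a square. *)
Lemma typeI_last_shell d v w : ~ is_square d -> val2 d v -> ~~ odd v -> (3 <= v)%N ->
  val2 (Z2sub d (Z2const (pw v))) w -> typeI d (v./2).+1 (pw v./2) (w - (v./2).+1).
Proof.
move=> hns hv hev hv3 hw.
have ev : v = (v./2 + v./2)%N by rewrite -{1}(odd_double_half v) (negbTE hev) add0n -addnn.
set j := v./2 in ev *.
have w_le : (w <= v + 2)%N.
  rewrite leqNgt; apply/negP => hlt; apply: hns.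
  have hd3 : (pw (v + 3) %| sval d (v + 3)%N - pw v)%Z.
    by apply: (res0_le hw.1); lia.
  apply: (@hensel_sqrt d (pw j) j 1); rewrite ?mulr1 ?subrr ?dvdz0 //.
  have -> : (2 * j + 3 = v + 3)%N by lia.
  by rewrite -pwD -ev -opprB rpredN.
have v_le : (v <= w)%N.
  rewrite leqNgt; apply/negP => hlt; case: hw => _; apply; apply/res0E => /=.
  by rewrite rpredB ?pw_dvd // (res0_le hv.1).
apply: typeI_of_drift; [lia | lia | apply: pw_dvd2; lia |].
apply: drift_shell; [lia | lia |].
have -> : (2 * j.+1 - 2 = v)%N by lia.
have -> : pw v - sval d w.+1 - pw w = - (sval d w.+1 + - pw v - pw w) - pw w.+1.
  by rewrite pwS; ring.
by rewrite rpredB ?rpredN ?dvdzz // (val2_exact hw).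
Qed.

Theorem theorem6p6 (d : Z2) :
  res d 2 = 0 ->
  ~ (exists y : Z2, eqZ2 (Z2mul y y) d) ->
  (forall x : Z2, ball 1 1 x -> ball 0 1 (fmap d x)) /\
  (exists Es : seq (Z2 -> Prop), min_decomp d (ball 0 1) Es) /\
  (forall v : nat, val2 d v ->
    let n0 := (v./2).+1 in
    (* (1) *)
    (v = 2%N -> val2 (Z2sub d (Z2const 4)) 3 ->
       min_decomp d (ball 0 1) [:: ball 0 2; ball 2 3; ball 6 3]) /\
    (* (2) *)
    (v = 2%N -> val2 (Z2sub d (Z2const 4)) 4 ->
       min_decomp d (ball 0 1)
         [:: ball 0 2; ball 2 4; ball 6 4; ball 10 4; ball 14 4]) /\
    (* (3) *)
    ((3 <= v)%N -> odd v ->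
       disjoint_union (ball 0 1)
         ([seq ball (pw n.-1) n | n <- iota 2 n0.-1] ++ [:: ball 0 n0]) /\
       (forall n : nat, (2 <= n <= n0)%N -> typeI d n (pw n.-1) (n - 2)) /\
       typeI d n0 0 n0.-1) /\
    (* (4) *)
    ((3 <= v)%N -> ~~ odd v ->
       disjoint_union (ball 0 1)
         ([seq ball (pw n.-1) n | n <- iota 2 (n0 - 2)]
            ++ [:: ball 0 n0; ball (pw n0.-1) n0]) /\
       (forall n : nat, (2 <= n <= n0.-1)%N -> typeI d n (pw n.-1) (n - 2)) /\
       typeI d n0 0 (n0 - 2) /\
       (forall w : nat, val2 (Z2sub d (Z2const (pw v))) w ->
          typeI d n0 (pw n0.-1) (w - n0)))).
Proof.
move=> d4 hns; split; first exact: fmap_odd_even.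
split; first by have [v hv] := exists_val2 hns; eexists; apply: min_decomp_drift_balls hv.
move=> v hv n0; have v_ge2 := val2_ge2 d4 hv.
split.
  move=> ev hw; subst v; split; first exact: disjoint_union_mod8.
  by case=> [|[|[|]]] //= _; [apply: minimal_component_ball0 | apply: minimal_component_shell2..].
split.
  move=> ev hw; subst v; split; first exact: disjoint_union_mod16.
  by case=> [|[|[|[|[|]]]]] //= _; [apply: minimal_component_ball0 | apply: minimal_component_shell2..].
have hv2 := odd_double_half v.
split=> [v3 vodd | v3 veven].
  rewrite vodd in hv2; split; first by apply: disjoint_union_shells.
  split=> [n /andP [n2 nn0]|]; first by apply: (typeI_shell hv n2); lia.
  by rewrite (_ : n0.-1 = v - n0)%N; [apply: (typeI_ball0 hv) | ]; lia.
rewrite (negbTE veven) add0n in hv2.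
split; first by apply: disjoint_union_shells_split; rewrite /n0; lia.
split=> [n /andP [n2 nn0]|]; first by apply: (typeI_shell hv n2); lia.
split; first by rewrite (_ : n0 - 2 = v - n0)%N; [apply: (typeI_ball0 hv) | ]; lia.
by move=> w; apply: typeI_last_shell.
Qed.
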